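(* Consider the system of ordinary differential equations in $\mathbb{R}^3$ $$\dot x = \vartheta,\qquad \dot\vartheta = -\lambda\vartheta - xu + x - x^3,\qquad \dot u = -\alpha u - \beta x\vartheta,$$ with real parameters $\alpha>0$, $\lambda = 0$ and $\beta>0$. Then every separatrix of the saddle $x=\vartheta=u=0$, i.e. every solution $(x(t),\vartheta(t),u(t))$, not identically zero, with $$\lim_{t\to-\infty}x(t)=\lim_{t\to-\infty}\vartheta(t)=\lim_{t\to-\infty}u(t)=0,$$ tends to infinity as $t\to+\infty$ (it has no $\omega$-limit points).
   Context: For $\alpha>0$, $\lambda=0$ the origin is a saddle equilibrium with a one-dimensional unstable manifold (eigenvalues $1,-1,-\alpha$); a separatrix is a nontrivial solution lying on this unstable manifold. *)

From Stdlib Require Import Reals.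
From Coquelicot Require Import Coquelicot.
Open Scope R_scope.

Definition is_solution (alpha lam beta : R) (x th u : R -> R) : Prop :=
  forall t : R,
    is_derive x t (th t) /\
    is_derive th t (- lam * th t - x t * u t + x t - x t ^ 3) /\
    is_derive u t (- alpha * u t - beta * x t * th t).

Definition state_norm (x th u : R -> R) (t : R) : R :=
  sqrt (x t ^ 2 + th t ^ 2 + u t ^ 2).

Definition is_separatrix (alpha lam beta : R) (x th u : R -> R) : Prop :=
  is_solution alpha lam beta x th u /\
  (exists t : R, x t <> 0 \/ th t <> 0 \/ u t <> 0) /\
  is_lim x m_infty 0 /\ is_lim th m_infty 0 /\ is_lim u m_infty 0.

From Stdlib Require Import Reals Lra Psatz Classical.
From Coquelicot Require Import Coquelicot.
Open Scope R_scope.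

(* For lam = 0 the function
     lyap = th^2/2 - x^2/2 + x^4/4 - u^2/(2 beta)
   satisfies lyap' = (alpha/beta) u^2 >= 0.  Along a separatrix it tends to 0 at -oo and is not
   identically 0, so lyap >= c > 0 from some time t1 on.  Suppose the orbit returns infinitely
   often to a ball |z| <= M.  After each return the solution stays bounded for a fixed time h, and
   unless lyap gains a fixed amount d during that time, u is small there; since
   u' = -alpha u - beta x th, so is x th; since (x th)' = th^2 + x^2 - x^4 - x^2 u, so is
   th^2 + x^2 - x^4.  These three quantities being small is incompatible with lyap >= c.  Hence
   lyap gains d at every return and is unbounded along the returns, although it is bounded on the
   ball. *)

Lemma is_derive_eq (f : R -> R) (t l l' : R) : is_derive f t l -> l = l' -> is_derive f t l'.
Proof. now intros H <-. Qed.

Lemma is_derive_Rconst (c t : R) : is_derive (fun _ => c) t 0.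
Proof. exact (is_derive_const c t). Qed.

Lemma is_derive_Ropp (f : R -> R) (t a : R) :
  is_derive f t a -> is_derive (fun s => - f s) t (- a).
Proof. exact (is_derive_opp f t a). Qed.

Lemma is_derive_Rplus (f g : R -> R) (t a b : R) :
  is_derive f t a -> is_derive g t b -> is_derive (fun s => f s + g s) t (a + b).
Proof. exact (is_derive_plus f g t a b). Qed.

Lemma is_derive_Rminus (f g : R -> R) (t a b : R) :
  is_derive f t a -> is_derive g t b -> is_derive (fun s => f s - g s) t (a - b).
Proof. exact (is_derive_minus f g t a b). Qed.

Lemma is_derive_Rdiv_const (f : R -> R) (t a k : R) :
  is_derive f t a -> is_derive (fun s => f s / k) t (a / k).
Proof.
  intros Hf. eapply is_derive_eq.
  - exact (Derive.is_derive_mult f (fun _ => / k) t a 0 Hf (is_derive_Rconst _ _)).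
  - unfold Rdiv; ring.
Qed.

Ltac derive_poly leaf := repeat match goal with
  | |- is_derive (fun _ => _ + _) _ _ => apply is_derive_Rplus
  | |- is_derive (fun _ => _ - _) _ _ => apply is_derive_Rminus
  | |- is_derive (fun _ => - _) _ _ => apply is_derive_Ropp
  | |- is_derive (fun _ => _ / _) _ _ => apply is_derive_Rdiv_const
  | |- is_derive (fun _ => _ ^ _) _ _ => apply is_derive_pow
  | |- is_derive (fun _ => _ * _) _ _ => apply Derive.is_derive_mult
  | |- is_derive (fun _ => ?c) _ _ => apply is_derive_Rconst
  | |- is_derive _ _ _ => leaf
  end.

Lemma derive_eq0_of_constant (f : R -> R) (c t l : R) :
  (forall r, f r = c) -> is_derive f t l -> l = 0.
Proof.
  intros Hc Hf.
  rewrite <- (is_derive_unique f t l Hf), (Derive_ext f (fun _ => c)) by exact Hc.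
  apply Derive_const.
Qed.

Lemma increment_ge_of_derive_ge (f df : R -> R) (a b m : R) :
  a <= b -> (forall r, is_derive f r (df r)) ->
  (forall r, a <= r <= b -> m <= df r) -> m * (b - a) <= f b - f a.
Proof.
  intros Hab Hf Hm.
  destruct (MVT_gen f a b df) as [c [Hc ->]].
  - intros r _; apply Hf.
  - intros r _; apply continuity_pt_filterlim, (ex_derive_continuous f).
    now exists (df r).
  - rewrite Rmin_left, Rmax_right in Hc by lra.
    apply Rmult_le_compat_r; [lra | now apply Hm].
Qed.

Lemma Rabs_increment_le (f df : R -> R) (a b L : R) :
  a <= b -> (forall r, is_derive f r (df r)) ->
  (forall r, a <= r <= b -> Rabs (df r) <= L) -> Rabs (f b - f a) <= L * (b - a).
Proof.
  intros Hab Hf HL.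
  assert (Hlo : - L * (b - a) <= f b - f a).
  { apply (increment_ge_of_derive_ge f df); auto.
    intros r Hr; specialize (HL r Hr); apply Rabs_le_between in HL; lra. }
  assert (Hhi : - L * (b - a) <= - f b - - f a).
  { apply (increment_ge_of_derive_ge (fun r => - f r) (fun r => - df r)); auto.
    - intro r; now apply is_derive_Ropp.
    - intros r Hr; specialize (HL r Hr); apply Rabs_le_between in HL; lra. }
  apply Rabs_le; lra.
Qed.

Lemma nondecreasing_of_derive_ge0 (f df : R -> R) (a b : R) :
  (forall r, is_derive f r (df r)) -> (forall r, 0 <= df r) -> a <= b -> f a <= f b.
Proof.
  intros Hf Hdf Hab.
  enough (0 * (b - a) <= f b - f a) by lra.
  apply (increment_ge_of_derive_ge f df); auto.
Qed.

(* [g] varies by at most [eta / 2] on [s, s + l], so [df >= eta / 4] there. *)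
Lemma increment_ge_of_large_drive (f df g dg : R -> R) (s l L eta : R) :
  (forall r, is_derive f r (df r)) -> (forall r, is_derive g r (dg r)) ->
  0 <= l -> L * l <= eta / 2 ->
  (forall r, s <= r <= s + l -> Rabs (dg r) <= L) ->
  (forall r, s <= r <= s + l -> Rabs (df r - g r) <= eta / 4) ->
  eta <= g s -> eta / 4 * l <= f (s + l) - f s.
Proof.
  intros Hf Hg Hl HLl HL Hfg Hgs.
  replace l with (s + l - s) at 1 by ring.
  apply (increment_ge_of_derive_ge f df); [lra | exact Hf |].
  intros r Hr.
  assert (Hvar : Rabs (g r - g s) <= L * (r - s))
    by (apply (Rabs_increment_le g dg); [lra | exact Hg | intros q Hq; apply HL; lra]).
  assert (L * (r - s) <= L * l).
  { apply Rmult_le_compat_l; [| lra]. specialize (HL s ltac:(lra)). pose proof (Rabs_pos (dg s)). lra. }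
  specialize (Hfg r Hr).
  apply Rabs_le_between in Hvar; apply Rabs_le_between in Hfg. lra.
Qed.

Lemma small_of_slow_primitive (f df g dg : R -> R) (s l L eta : R) :
  (forall r, is_derive f r (df r)) -> (forall r, is_derive g r (dg r)) ->
  0 <= l -> L * l <= eta / 2 ->
  (forall r, s <= r <= s + l -> Rabs (dg r) <= L) ->
  (forall r, s <= r <= s + l -> Rabs (df r - g r) <= eta / 4) ->
  Rabs (f (s + l) - f s) < eta / 4 * l -> Rabs (g s) < eta.
Proof.
  intros Hf Hg Hl HLl HL Hfg Hslow.
  apply Rnot_le_lt; intro Hgs.
  destruct (Rle_or_lt 0 (g s)) as [Hpos | Hneg].
  - rewrite Rabs_pos_eq in Hgs by lra.
    pose proof (increment_ge_of_large_drive f df g dg s l L eta Hf Hg Hl HLl HL Hfg Hgs).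
    pose proof (Rle_abs (f (s + l) - f s)). lra.
  - rewrite Rabs_left in Hgs by lra.
    pose proof (increment_ge_of_large_drive (fun r => - f r) (fun r => - df r)
      (fun r => - g r) (fun r => - dg r) s l L eta) as H.
    assert (eta / 4 * l <= - f (s + l) - - f s).
    { apply H; auto.
      - intro r; now apply is_derive_Ropp.
      - intro r; now apply is_derive_Ropp.
      - intros r Hr; rewrite Rabs_Ropp; auto.
      - intros r Hr; replace (- df r - - g r) with (- (df r - g r)) by ring.
        rewrite Rabs_Ropp; auto. }
    pose proof (Rle_abs (- (f (s + l) - f s))). rewrite Rabs_Ropp in *. lra.
Qed.

Lemma le_twice_of_derive_le_sq (f df : R -> R) (C A t s : R) :
  (forall r, is_derive f r (df r)) -> (forall r, 0 < f r) -> (forall r, df r <= C * f r ^ 2) ->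
  0 < C -> 0 < A -> f t <= A -> t <= s <= t + / (2 * C * A) -> f s <= 2 * A.
Proof.
  intros Hf Hpos Hdf HC HA Ht Hs.
  assert (Hinv : - C * (s - t) <= / f s - / f t).
  { apply (increment_ge_of_derive_ge (fun r => / f r) (fun r => - df r / f r ^ 2)); [lra | |].
    - intro r; apply is_derive_inv; [apply Hf | specialize (Hpos r); lra].
    - intros r _. specialize (Hdf r). specialize (Hpos r).
      apply Rmult_le_reg_r with (f r ^ 2); [nra |].
      unfold Rdiv. rewrite Rmult_assoc, Rinv_l by nra. lra. }
  assert (C * (s - t) <= / (2 * A)).
  { apply Rle_trans with (C * / (2 * C * A)); [apply Rmult_le_compat_l; lra |].
    right; field; lra. }
  assert (/ A <= / f t) by (apply Rinv_le_contravar; auto).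
  assert (/ (2 * A) <= / f s) by (replace (/ (2 * A)) with (/ A - / (2 * A)) by (field; lra); lra).
  specialize (Hpos s).
  rewrite <- (Rinv_inv (f s)), <- (Rinv_inv (2 * A)).
  apply Rinv_le_contravar; [apply Rinv_0_lt_compat; lra | assumption].
Qed.

Lemma exists_short_step (a L eta : R) :
  0 < a -> 0 < L -> 0 < eta -> exists l, 0 < l /\ l <= a /\ L * l <= eta / 2.
Proof.
  intros Ha HL Heta. exists (Rmin a (eta / (2 * L))); repeat split.
  - apply Rmin_pos; [lra | apply Rdiv_lt_0_compat; lra].
  - apply Rmin_l.
  - apply Rle_trans with (L * (eta / (2 * L))); [apply Rmult_le_compat_l; [lra | apply Rmin_r] |].
    right; field; lra.
Qed.

Lemma is_lim_Rdiv_const (f : R -> R) (a : Rbar) (l k : R) :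
  is_lim f a l -> is_lim (fun y => f y / k) a (l / k).
Proof. exact (is_lim_scal_r f (/ k) a l). Qed.

Lemma is_lim_pow_0 (f : R -> R) (a : Rbar) (n : nat) :
  is_lim f a 0 -> is_lim (fun y => f y ^ S n) a 0.
Proof.
  intros Hf; induction n as [|n IH].
  - apply (is_lim_ext f); [intro; simpl; ring | exact Hf].
  - apply (is_lim_ext (fun y => f y * f y ^ S n)); [intro; simpl; ring |].
    replace (Finite 0) with (Rbar_mult 0 0) by (simpl; f_equal; ring).
    apply is_lim_mult; simpl; auto.
Qed.

Lemma lim_m_infty_le_of_nondecreasing (f : R -> R) (l t : R) :
  (forall a b, a <= b -> f a <= f b) -> is_lim f m_infty l -> l <= f t.
Proof.
  intros Hf Hl.
  apply (is_lim_le_loc f (fun _ => f t) m_infty l (f t)); [| exact Hl | apply is_lim_const].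
  exists t; intros s Hs; apply Hf; lra.
Qed.

Lemma eq_lim_m_infty_of_derive_0 (f : R -> R) (l t : R) :
  (forall r, is_derive f r 0) -> is_lim f m_infty l -> f t = l.
Proof.
  intros Hf Hl.
  assert (Hmono : forall g : R -> R, (forall r, is_derive g r 0) -> forall a b, a <= b -> g a <= g b)
    by (intros g Hg a b; apply (nondecreasing_of_derive_ge0 g (fun _ => 0)); auto; intro; lra).
  apply Rle_antisym.
  - enough (- l <= - f t) by lra.
    apply (lim_m_infty_le_of_nondecreasing (fun r => - f r)).
    + apply Hmono; intro r; rewrite <- Ropp_0; now apply is_derive_Ropp.
    + exact (is_lim_opp f m_infty l Hl).
  - apply lim_m_infty_le_of_nondecreasing; [apply Hmono, Hf | exact Hl].
Qed.

Lemma not_is_lim_p_infty (f : R -> R) :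
  ~ is_lim f p_infty p_infty -> exists M, forall T, exists t, T <= t /\ f t <= M.
Proof.
  intro Hf. apply NNPP; intro Hn. apply Hf, is_lim_spec. intro M.
  apply NNPP; intro HM. apply Hn. exists M. intro T.
  apply NNPP; intro HT. apply HM. exists T. intros t Ht.
  apply Rnot_le_lt; intro Hft. apply HT. exists t; split; [lra | exact Hft].
Qed.

Lemma unbounded_of_recurrent_increments (f : R -> R) (P : R -> Prop) (h d : R) :
  0 < d -> (forall a b, a <= b -> f a <= f b) -> (forall T, exists t, T <= t /\ P t) ->
  (forall t, P t -> f t + d <= f (t + h)) -> forall K, exists t, P t /\ K <= f t.
Proof.
  intros Hd Hmono Hrec Hstep K.
  destruct (Hrec 0) as [t0 [_ Ht0]].
  assert (Hn : forall n : nat, exists t, P t /\ f t0 + INR n * d <= f t).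
  { induction n as [|n [t [Ht Hft]]].
    - exists t0; split; [exact Ht0 | simpl; lra].
    - destruct (Hrec (t + h)) as [t' [Htt' Ht']].
      exists t'; split; [exact Ht' |].
      pose proof (Hstep t Ht); pose proof (Hmono _ _ Htt').
      rewrite S_INR; lra. }
  destruct (INR_archimed d (K - f t0) Hd) as [n Hnd].
  destruct (Hn n) as [t [Ht Hft]].
  exists t; split; [exact Ht | lra].
Qed.

Lemma radial_growth_le (alpha beta X T U : R) : 0 <= alpha -> 0 <= beta ->
  2 * X * T + 2 * T * (- X * U + X - X ^ 3) + 2 * U * (- alpha * U - beta * X * T)
  <= (4 + beta) * (1 + X ^ 2 + T ^ 2 + U ^ 2) ^ 2.
Proof.
  intros Ha Hb.
  set (N := 1 + X ^ 2 + T ^ 2 + U ^ 2).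
  assert (HXT : 2 * Rabs (X * T) <= N).
  { unfold N; rewrite Rabs_mult; pose proof (pow2_ge_0 (Rabs X - Rabs T)).
    rewrite <- (pow2_abs X), <- (pow2_abs T); nra. }
  assert (HU : 2 * Rabs U <= N).
  { unfold N. pose proof (pow2_ge_0 (Rabs U - 1)). rewrite <- (pow2_abs U). nra. }
  assert (HN : 1 <= N) by (unfold N; nra).
  assert (HX2 : X ^ 2 <= N) by (unfold N; nra).
  assert (H1 : 4 * X * T <= 2 * N ^ 2) by (pose proof (Rle_abs (X * T)); nra).
  assert (H2 : - 2 * (X * T) * U <= N ^ 2 / 2).
  { pose proof (Rabs_pos (X*T)); pose proof (Rabs_pos U).
    pose proof (Rle_abs (-(X*T*U))) as HXTU. rewrite Rabs_Ropp, !Rabs_mult in HXTU.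
    assert (2 * Rabs (X * T) * (2 * Rabs U) <= N * N) by (apply Rmult_le_compat; lra).
    rewrite Rabs_mult in *. nra. }
  assert (H3 : - 2 * X ^ 3 * T <= N ^ 2).
  { pose proof (Rle_abs (-(X*T))) as HXT'. rewrite Rabs_Ropp in HXT'. nra. }
  nra.
Qed.

Lemma slow_manifold_gap (beta c e X T U : R) : 0 < beta -> e <= c -> e <= 1 / 9 ->
  c <= T ^ 2 / 2 - X ^ 2 / 2 + X ^ 4 / 4 - U ^ 2 / (2 * beta) ->
  Rabs (T ^ 2 + X ^ 2 - X ^ 4) < e -> 2 / 3 < Rabs (X * T).
Proof.
  intros Hb Hec He9 Hc Hq.
  apply Rabs_def2 in Hq.
  assert (HU : 0 <= U ^ 2 / (2 * beta)) by (apply Rmult_le_pos; [nra | left; apply Rinv_0_lt_compat; lra]).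
  assert (Ha : 4 / 3 < X ^ 2) by nra.
  assert (HT : 1 / 3 < T ^ 2) by nra.
  rewrite <- (Rabs_pos_eq (2 / 3)) by lra. apply Rsqr_lt_abs_0. unfold Rsqr. nra.
Qed.

Lemma Rabs_le_of_sq_le (X B : R) : 1 <= B -> X ^ 2 <= B -> Rabs X <= B.
Proof. intros. apply Rabs_le. nra. Qed.

Lemma Rabs_mult_le_compat (a b A B : R) : Rabs a <= A -> Rabs b <= B -> Rabs (a * b) <= A * B.
Proof. intros. rewrite Rabs_mult. apply Rmult_le_compat; auto using Rabs_pos. Qed.

Lemma Rabs_plus_le_compat (a b A B : R) : Rabs a <= A -> Rabs b <= B -> Rabs (a + b) <= A + B.
Proof. intros. eapply Rle_trans; [apply Rabs_triang | lra]. Qed.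

Lemma Rabs_minus_le_compat (a b A B : R) : Rabs a <= A -> Rabs b <= B -> Rabs (a - b) <= A + B.
Proof. intros. eapply Rle_trans; [apply Rabs_triang | rewrite Rabs_Ropp; lra]. Qed.

Lemma Rabs_opp_le_compat (a A : R) : Rabs a <= A -> Rabs (- a) <= A.
Proof. now rewrite Rabs_Ropp. Qed.

Lemma Rabs_const_le (k : R) : 0 <= k -> Rabs k <= k.
Proof. intros; rewrite Rabs_pos_eq; lra. Qed.

Ltac bound_Rabs := repeat first
  [ eassumption | apply Rabs_minus_le_compat | apply Rabs_plus_le_compat
  | apply Rabs_mult_le_compat | apply Rabs_opp_le_compat | apply Rabs_const_le; lra ].

Section Separatrix.

Variables (alpha beta : R) (x th u : R -> R).
Hypothesis alpha_gt0 : 0 < alpha.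
Hypothesis beta_gt0 : 0 < beta.
Hypothesis sol : is_solution alpha 0 beta x th u.

Lemma derive_x t : is_derive x t (th t).
Proof. apply sol. Qed.

Lemma derive_th t : is_derive th t (- x t * u t + x t - x t ^ 3).
Proof. eapply is_derive_eq; [apply sol | ring]. Qed.

Lemma derive_u t : is_derive u t (- alpha * u t - beta * x t * th t).
Proof. apply sol. Qed.

(* [idtac;] delays the [lazymatch] until [derive_poly] reaches a leaf; matching the head
   syntactically avoids slow failing unifications of [is_derive] goals. *)
Ltac derive_state :=
  eapply is_derive_eq; [derive_poly ltac:(idtac; lazymatch goal with
    | |- is_derive x _ _ => apply derive_x
    | |- is_derive th _ _ => apply derive_th
    | |- is_derive u _ _ => apply derive_u
    end) |].

Definition lyap t := th t ^ 2 / 2 - x t ^ 2 / 2 + x t ^ 4 / 4 - u t ^ 2 / (2 * beta).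

Definition sq_norm1 t := 1 + x t ^ 2 + th t ^ 2 + u t ^ 2.

(* The virial [x x'] and its derivative where [u = 0]. *)
Definition vir t := x t * th t.

Definition drift t := th t ^ 2 + x t ^ 2 - x t ^ 4.

Definition bounded_on t h B :=
  forall s, t <= s <= t + h -> Rabs (x s) <= B /\ Rabs (th s) <= B /\ Rabs (u s) <= B.

Lemma derive_lyap t : is_derive lyap t (alpha / beta * u t ^ 2).
Proof. unfold lyap; derive_state. simpl; field; lra. Qed.

Lemma lyap_nondecreasing a b : a <= b -> lyap a <= lyap b.
Proof.
  apply (nondecreasing_of_derive_ge0 lyap _ a b derive_lyap).
  intro r; apply Rmult_le_pos; [apply Rlt_le, Rdiv_lt_0_compat; lra | apply pow2_ge_0].
Qed.

Lemma derive_u_sq t : is_derive (fun s => u s ^ 2) t (- (2 * u t * (alpha * u t + beta * vir t))).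
Proof. derive_state. unfold vir; simpl; ring. Qed.

Lemma derive_vir t : is_derive vir t (drift t - x t ^ 2 * u t).
Proof. unfold vir; derive_state. unfold drift; simpl; ring. Qed.

Lemma derive_drift t : is_derive drift t (2 * vir t * (2 - u t - 3 * x t ^ 2)).
Proof. unfold drift; derive_state. unfold vir; simpl; ring. Qed.

Lemma is_lim_lyap_m_infty :
  is_lim x m_infty 0 -> is_lim th m_infty 0 -> is_lim u m_infty 0 -> is_lim lyap m_infty 0.
Proof.
  intros Hx Hth Hu.
  replace (Finite 0) with (Finite (0 / 2 - 0 / 2 + 0 / 4 - 0 / (2 * beta))) by (f_equal; field; lra).
  apply is_lim_minus'; [apply is_lim_plus'; [apply is_lim_minus' |] |];
    apply is_lim_Rdiv_const, is_lim_pow_0; assumption.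
Qed.

Lemma lyap_le_sq_norm1 t : lyap t <= sq_norm1 t ^ 2.
Proof.
  unfold lyap, sq_norm1.
  assert (0 <= u t ^ 2 / (2 * beta))
    by (apply Rmult_le_pos; [apply pow2_ge_0 | left; apply Rinv_0_lt_compat; lra]).
  pose proof (pow2_ge_0 (x t)); pose proof (pow2_ge_0 (th t)); pose proof (pow2_ge_0 (u t)).
  nra.
Qed.

Lemma sq_norm1_le_of_state_norm_le t M : state_norm x th u t <= M -> sq_norm1 t <= 1 + M ^ 2.
Proof.
  unfold state_norm, sq_norm1. intro HM.
  set (S := x t ^ 2 + th t ^ 2 + u t ^ 2) in *.
  assert (HS : 0 <= S) by (unfold S; pose proof (pow2_ge_0 (x t));
    pose proof (pow2_ge_0 (th t)); pose proof (pow2_ge_0 (u t)); lra).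
  enough (S <= M ^ 2) by (unfold S in *; lra).
  pose proof (sqrt_sqrt S HS); pose proof (sqrt_pos S).
  nra.
Qed.

Lemma sq_norm1_window A t s :
  0 < A -> sq_norm1 t <= A -> t <= s <= t + / (2 * (4 + beta) * A) -> sq_norm1 s <= 2 * A.
Proof.
  intros HA Ht Hs.
  apply (le_twice_of_derive_le_sq sq_norm1 (fun r => 2 * x r * th r
      + 2 * th r * (- x r * u r + x r - x r ^ 3) + 2 * u r * (- alpha * u r - beta * x r * th r))
      (4 + beta) A t s); auto; try lra.
  - intro r; unfold sq_norm1; derive_state. simpl; ring.
  - intro r; unfold sq_norm1.
    pose proof (pow2_ge_0 (x r)); pose proof (pow2_ge_0 (th r)); pose proof (pow2_ge_0 (u r)); lra.
  - intro r; apply radial_growth_le; lra.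
Qed.

Lemma bounded_on_of_sq_norm1_le A t :
  1 <= A -> sq_norm1 t <= A -> bounded_on t (/ (2 * (4 + beta) * A)) (2 * A).
Proof.
  intros HA Ht s Hs.
  pose proof (sq_norm1_window A t s ltac:(lra) Ht Hs) as H; unfold sq_norm1 in H.
  pose proof (pow2_ge_0 (x s)); pose proof (pow2_ge_0 (th s)); pose proof (pow2_ge_0 (u s)).
  repeat split; apply Rabs_le_of_sq_le; lra.
Qed.

Definition deriv_bound B := (12 + 2 * alpha + 2 * beta) * B ^ 4.

Lemma deriv_bound_gt0 B : 1 <= B -> 0 < deriv_bound B.
Proof.
  intro HB; unfold deriv_bound; pose proof (pow_R1_Rle B 4 HB).
  apply Rmult_lt_0_compat; lra.
Qed.


Lemma derivative_bounds B s : 1 <= B ->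
  Rabs (x s) <= B /\ Rabs (th s) <= B /\ Rabs (u s) <= B ->
  Rabs (- (2 * u s * (alpha * u s + beta * vir s))) <= deriv_bound B /\
  Rabs (drift s - x s ^ 2 * u s) <= deriv_bound B /\
  Rabs (2 * vir s * (2 - u s - 3 * x s ^ 2)) <= deriv_bound B.
Proof.
  intros HB (Hx & Hth & Hu).
  assert (Hvir : Rabs (vir s) <= B * B) by (unfold vir; bound_Rabs).
  assert (Hx2 : Rabs (x s ^ 2) <= B * B) by (replace (x s ^ 2) with (x s * x s) by ring; bound_Rabs).
  assert (Hth2 : Rabs (th s ^ 2) <= B * B) by (replace (th s ^ 2) with (th s * th s) by ring; bound_Rabs).
  assert (Hx4 : Rabs (x s ^ 4) <= B * B * (B * B))
    by (replace (x s ^ 4) with (x s ^ 2 * x s ^ 2) by ring; bound_Rabs).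
  assert (HB2 : B <= B * B) by nra.
  assert (HB3 : B * B <= B * B * B) by nra.
  assert (HB4 : B * B * B <= B ^ 4) by (simpl; nra).
  unfold deriv_bound, drift. repeat split; (eapply Rle_trans; [bound_Rabs |]); nra.
Qed.

Lemma lyap_ge0 t :
  is_lim x m_infty 0 -> is_lim th m_infty 0 -> is_lim u m_infty 0 -> 0 <= lyap t.
Proof.
  intros Hx Hth Hu.
  apply lim_m_infty_le_of_nondecreasing; [exact lyap_nondecreasing |].
  now apply is_lim_lyap_m_infty.
Qed.

Lemma lyap_pos_somewhere :
  (exists t, x t <> 0 \/ th t <> 0 \/ u t <> 0) ->
  is_lim x m_infty 0 -> is_lim th m_infty 0 -> is_lim u m_infty 0 ->
  exists t, 0 < lyap t.
Proof.
  intros [t0 Ht0] Hx Hth Hu.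
  apply NNPP; intro Hneg.
  assert (Hlyap0 : forall t, lyap t = 0).
  { intro t; apply Rle_antisym; [| now apply lyap_ge0].
    apply Rnot_lt_le; intro Ht; apply Hneg; now exists t. }
  assert (Hu0 : forall t, u t = 0).
  { intro t. pose proof (derive_eq0_of_constant lyap 0 t _ Hlyap0 (derive_lyap t)) as H.
    assert (u t ^ 2 = 0) by (apply Rmult_eq_reg_l with (alpha / beta);
      [lra | apply Rgt_not_eq, Rdiv_lt_0_compat; lra]).
    nra. }
  assert (Hvir0 : forall t, vir t = 0).
  { intro t. pose proof (derive_eq0_of_constant u 0 t _ Hu0 (derive_u t)) as H.
    rewrite Hu0 in H. unfold vir. nra. }
  assert (Hx0 : forall t, x t = 0).
  { intro t. enough (x t ^ 2 = 0) by nra.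
    apply (eq_lim_m_infty_of_derive_0 (fun s => x s ^ 2)); [| now apply (is_lim_pow_0 x m_infty 1)].
    intro r; derive_state. rewrite <- (Rmult_0_r 2), <- (Hvir0 r); unfold vir; simpl; ring. }
  assert (Hth0 : forall t, th t = 0)
    by (intro t; exact (derive_eq0_of_constant x 0 t _ Hx0 (derive_x t))).
  destruct Ht0 as [H | [H | H]]; apply H; auto.
Qed.

Section Window.

Variables (B h : R).
Hypothesis B_ge1 : 1 <= B.
Hypothesis h_gt0 : 0 < h.

Lemma u_small_of_lyap_slow e : 0 < e -> exists d, 0 < d /\ forall t, bounded_on t h B ->
  lyap (t + h) - lyap t < d -> forall s, t <= s <= t + h / 2 -> Rabs (u s) < e.
Proof.
  intro He.
  pose proof (deriv_bound_gt0 B B_ge1) as HL; set (L := deriv_bound B) in *.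
  destruct (exists_short_step (h / 2) L (e ^ 2)) as (l & Hl & Hlh & HLl); [lra | lra | nra |].
  exists (alpha / beta * (e ^ 2 / 4 * l)); split.
  { apply Rmult_lt_0_compat; [apply Rdiv_lt_0_compat | apply Rmult_lt_0_compat]; nra. }
  intros t Hwin Hslow s Hs.
  assert (Hu2 : Rabs (u s ^ 2) < e ^ 2).
  { apply (small_of_slow_primitive (fun r => beta / alpha * lyap r) (fun r => u r ^ 2)
      (fun r => u r ^ 2) (fun r => - (2 * u r * (alpha * u r + beta * vir r))) s l L (e ^ 2)).
    - intro r; eapply is_derive_eq; [apply is_derive_scal, derive_lyap | field; lra].
    - exact derive_u_sq.
    - lra.
    - exact HLl.
    - intros r Hr; apply (derivative_bounds B r B_ge1), Hwin; lra.
    - intros r _; rewrite Rminus_diag, Rabs_R0; nra.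
    - assert (lyap (s + l) - lyap s <= lyap (t + h) - lyap t)
        by (pose proof (lyap_nondecreasing t s); pose proof (lyap_nondecreasing (s + l) (t + h)); lra).
      assert (0 <= lyap (s + l) - lyap s) by (pose proof (lyap_nondecreasing s (s + l)); lra).
      rewrite <- Rmult_minus_distr_l, Rabs_mult, Rabs_pos_eq, Rabs_pos_eq by
        (try apply Rlt_le, Rdiv_lt_0_compat; lra).
      apply Rmult_lt_reg_l with (alpha / beta); [apply Rdiv_lt_0_compat; lra |].
      replace (alpha / beta * (beta / alpha * (lyap (s + l) - lyap s))) with (lyap (s + l) - lyap s)
        by (field; lra).
      lra. }
  rewrite Rabs_pos_eq in Hu2 by apply pow2_ge_0.
  apply Rabs_def1; nra.
Qed.

Lemma vir_small_of_u_small e : 0 < e -> exists e', 0 < e' /\ forall t, bounded_on t h B ->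
  (forall s, t <= s <= t + h / 2 -> Rabs (u s) < e') ->
  forall s, t <= s <= t + h / 4 -> Rabs (vir s) < e.
Proof.
  intro He.
  pose proof (deriv_bound_gt0 B B_ge1) as HL; set (L := deriv_bound B) in *.
  destruct (exists_short_step (h / 4) L e) as (l & Hl & Hlh & HLl); [lra | lra | lra |].
  set (e' := Rmin (beta * e / (4 * alpha)) (beta * e * l / 8)).
  assert (He'a : e' <= beta * e / (4 * alpha)) by apply Rmin_l.
  assert (He'l : e' <= beta * e * l / 8) by apply Rmin_r.
  exists e'; split.
  { apply Rmin_pos; apply Rdiv_lt_0_compat; repeat apply Rmult_lt_0_compat; lra. }
  intros t Hwin Hu s Hs.
  apply (small_of_slow_primitive (fun r => - u r / beta) (fun r => alpha / beta * u r + vir r)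
      vir (fun r => drift r - x r ^ 2 * u r) s l L e).
  - intro r; eapply is_derive_eq; [apply is_derive_Rdiv_const, is_derive_Ropp, derive_u |].
    unfold vir; field; lra.
  - exact derive_vir.
  - lra.
  - exact HLl.
  - intros r Hr; apply (derivative_bounds B r B_ge1), Hwin; lra.
  - intros r Hr. replace (alpha / beta * u r + vir r - vir r) with (alpha / beta * u r) by ring.
    rewrite Rabs_mult, (Rabs_pos_eq (alpha / beta)) by (apply Rlt_le, Rdiv_lt_0_compat; lra).
    assert (Hur : Rabs (u r) < e') by (apply Hu; lra).
    apply Rle_trans with (alpha / beta * e').
    + apply Rmult_le_compat_l; [apply Rlt_le, Rdiv_lt_0_compat | ]; lra.
    + apply Rle_trans with (alpha / beta * (beta * e / (4 * alpha)));
        [apply Rmult_le_compat_l; [apply Rlt_le, Rdiv_lt_0_compat |]; lra | right; field; lra].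
  - assert (Hu1 : Rabs (u s) < e') by (apply Hu; lra).
    assert (Hu2 : Rabs (u (s + l)) < e') by (apply Hu; lra).
    replace (- u (s + l) / beta - - u s / beta) with (- (u (s + l) - u s) / beta) by (field; lra).
    rewrite Rabs_div, Rabs_Ropp, (Rabs_pos_eq beta) by lra.
    apply Rmult_lt_reg_r with beta; [lra |]. unfold Rdiv at 1.
    rewrite Rmult_assoc, Rinv_l, Rmult_1_r by lra.
    pose proof (Rabs_minus_le_compat (u (s + l)) (u s) _ _ (Rle_refl _) (Rle_refl _)). lra.
Qed.

Lemma drift_small_of_vir_small e : 0 < e -> exists e' e'', 0 < e' /\ 0 < e'' /\
  forall t, bounded_on t h B ->
  (forall s, t <= s <= t + h / 4 -> Rabs (u s) < e'') ->
  (forall s, t <= s <= t + h / 4 -> Rabs (vir s) < e') -> Rabs (drift t) < e.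
Proof.
  intro He.
  pose proof (deriv_bound_gt0 B B_ge1) as HL; set (L := deriv_bound B) in *.
  destruct (exists_short_step (h / 4) L e) as (l & Hl & Hlh & HLl); [lra | lra | lra |].
  exists (e * l / 8), (e / (4 * B ^ 2)); split; [nra | split; [apply Rdiv_lt_0_compat; nra |]].
  intros t Hwin Hu Hvir.
  apply (small_of_slow_primitive vir (fun r => drift r - x r ^ 2 * u r) drift
      (fun r => 2 * vir r * (2 - u r - 3 * x r ^ 2)) t l L e).
  - exact derive_vir.
  - exact derive_drift.
  - lra.
  - exact HLl.
  - intros r Hr; apply (derivative_bounds B r B_ge1), Hwin; lra.
  - intros r Hr. replace (drift r - x r ^ 2 * u r - drift r) with (- (x r ^ 2 * u r)) by ring.
    rewrite Rabs_Ropp, Rabs_mult, <- RPow_abs.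
    destruct (Hwin r ltac:(lra)) as (Hx & _ & _).
    assert (Hur : Rabs (u r) < e / (4 * B ^ 2)) by (apply Hu; lra).
    assert (Rabs (x r) ^ 2 <= B ^ 2) by (apply pow_incr; split; [apply Rabs_pos | exact Hx]).
    apply Rle_trans with (B ^ 2 * (e / (4 * B ^ 2))).
    + apply Rmult_le_compat; [apply pow_le, Rabs_pos | apply Rabs_pos | assumption | lra].
    + right; field; nra.
  - assert (Hv1 : Rabs (vir t) < e * l / 8) by (apply Hvir; lra).
    assert (Hv2 : Rabs (vir (t + l)) < e * l / 8) by (apply Hvir; lra).
    pose proof (Rabs_minus_le_compat (vir (t + l)) (vir t) _ _ (Rle_refl _) (Rle_refl _)). lra.
Qed.

End Window.

Lemma lyap_increment_of_bounded A c : 1 <= A -> 0 < c ->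
  exists h d, 0 < d /\ forall t, sq_norm1 t <= A -> c <= lyap t -> lyap t + d <= lyap (t + h).
Proof.
  intros HA Hc.
  set (h := / (2 * (4 + beta) * A)).
  assert (Hh : 0 < h) by (apply Rinv_0_lt_compat; nra).
  assert (HB : 1 <= 2 * A) by lra.
  set (e := Rmin c (1 / 9)).
  assert (He : 0 < e) by (apply Rmin_pos; lra).
  destruct (drift_small_of_vir_small (2 * A) h HB Hh e He) as (ev & eu & Hev & Heu & Hdrift).
  destruct (vir_small_of_u_small (2 * A) h HB Hh (Rmin ev (2 / 3))) as (e1 & He1 & Hvir);
    [apply Rmin_pos; lra |].
  destruct (u_small_of_lyap_slow (2 * A) h HB Hh (Rmin e1 eu)) as (d & Hd & Hu);
    [apply Rmin_pos; lra |].
  exists h, d; split; [exact Hd |].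
  intros t HtA Htc; apply Rnot_lt_le; intro Hslow.
  pose proof (bounded_on_of_sq_norm1_le A t HA HtA) as Hwin.
  assert (Hus : forall s, t <= s <= t + h / 2 -> Rabs (u s) < Rmin e1 eu)
    by (apply Hu; [exact Hwin | lra]).
  assert (Hvs : forall s, t <= s <= t + h / 4 -> Rabs (vir s) < Rmin ev (2 / 3)).
  { apply Hvir; [exact Hwin |]. intros s Hs. eapply Rlt_le_trans; [apply Hus, Hs | apply Rmin_l]. }
  assert (Hq : Rabs (drift t) < e).
  { apply Hdrift; [exact Hwin | |].
    - intros s Hs. eapply Rlt_le_trans; [apply Hus; lra | apply Rmin_r].
    - intros s Hs. eapply Rlt_le_trans; [apply Hvs, Hs | apply Rmin_l]. }
  assert (Hgap : 2 / 3 < Rabs (vir t))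
    by exact (slow_manifold_gap beta c e (x t) (th t) (u t) beta_gt0 (Rmin_l _ _) (Rmin_r _ _) Htc Hq).
  assert (Rabs (vir t) < 2 / 3)
    by (eapply Rlt_le_trans; [apply Hvs; lra | apply Rmin_r]).
  lra.
Qed.

End Separatrix.

Theorem lemma1 (alpha lam beta : R) (x th u : R -> R) :
  0 < alpha -> lam = 0 -> 0 < beta ->
  is_separatrix alpha lam beta x th u ->
  is_lim (state_norm x th u) p_infty p_infty.
Proof.
  intros Halpha -> Hbeta (Hsol & Hnontriv & Hx & Hth & Hu).
  pose proof (lyap_nondecreasing alpha beta x th u Halpha Hbeta Hsol) as Hmono.
  destruct (lyap_pos_somewhere alpha beta x th u Halpha Hbeta Hsol Hnontriv Hx Hth Hu) as [t1 Ht1].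
  apply NNPP; intro Hnot.
  destruct (not_is_lim_p_infty _ Hnot) as [M HM].
  set (A := 1 + M ^ 2).
  assert (HA : 1 <= A) by (pose proof (pow2_ge_0 M); unfold A; lra).
  destruct (lyap_increment_of_bounded alpha beta x th u Halpha Hbeta Hsol A (lyap beta x th u t1) HA Ht1)
    as (h & d & Hd & Hstep).
  set (P := fun t => t1 <= t /\ sq_norm1 x th u t <= A).
  assert (Hrec : forall T, exists t, T <= t /\ P t).
  { intro T. destruct (HM (Rmax T t1)) as (t & Ht & HtM).
    exists t; repeat split; [pose proof (Rmax_l T t1) | pose proof (Rmax_r T t1) |]; try lra.
    now apply sq_norm1_le_of_state_norm_le. }
  assert (Hinc : forall t, P t -> lyap beta x th u t + d <= lyap beta x th u (t + h))
    by (intros t [Ht1t HtA]; apply Hstep; [exact HtA | now apply Hmono]).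
  destruct (unbounded_of_recurrent_increments _ P h d Hd Hmono Hrec Hinc (A ^ 2 + 1))
    as (t & (_ & HtA) & HtK).
  pose proof (lyap_le_sq_norm1 beta x th u Hbeta t).
  assert (sq_norm1 x th u t ^ 2 <= A ^ 2) by (apply pow_incr; split; [unfold sq_norm1; nra | exact HtA]).
  lra.
Qed.
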